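(* Let $\mathbb{V}$ and $\mathbb{V}'$ be varieties with the same signature $\mathcal{F}$ and defining sets of identities $\Sigma\subseteq\Sigma'$ respectively, and suppose $\mathbb{V}$ is BIT speciale. Let $A'$ be a $\mathbb{V}'$-algebra. A subset $H\subseteq A'$ is an ideal of $A'$ in the variety $\mathbb{V}'$ if and only if it is an ideal of $A'$ in the variety $\mathbb{V}$.
   Context: BIT speciale: the algebraic theory of $\mathbb{V}$ contains a constant $0$ and, for some $n\ge1$, binary terms $\alpha_1,\dots,\alpha_n$ and an $(n+1)$-ary term $\theta$ such that $\alpha_i(x,x)=0$ and $\theta(\alpha_1(x,y),\dots,\alpha_n(x,y),y)=x$ are identities of $\mathbb{V}$. For a variety $\mathbb{W}$ with signature $\mathcal{F}$: an ideal term of $\mathbb{W}$ in the variables $y_1,\dots,y_p$ is a term $t(x_1,\dots,x_m,y_1,\dots,y_p)$ over $\mathcal{F}$ such that $t(x_1,\dots,x_m,0,\dots,0)=0$ is an identity of $\mathbb{W}$; a non-empty subset $H$ of a $\mathbb{W}$-algebra $A$ is an ideal of $A$ in $\mathbb{W}$ if $t(a_1,\dots,a_m,b_1,\dots,b_p)\in H$ for every ideal term $t$ of $\mathbb{W}$, all $a_r\in A$ and all $b_s\in H$. A $\mathbb{V}'$-algebra is in particular a $\mathbb{V}$-algebra. *)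

From mathcomp Require Import all_boot.
Set Implicit Arguments. Unset Strict Implicit. Unset Printing Implicit Defensive.

Record signature := Signature { sym : Type; arity : sym -> nat }.

Inductive term (F : signature) (X : Type) : Type :=
  | Var : X -> term F X
  | App : forall f : sym F, ('I_(arity f) -> term F X) -> term F X.
Arguments Var {F X} x.
Arguments App {F X} f args.

Record algebra (F : signature) := Algebra {
  carrier :> Type;
  ops : forall f : sym F, ('I_(arity f) -> carrier) -> carrier }.

Fixpoint eval (F : signature) (A : algebra F) (X : Type) (v : X -> A)
  (t : term F X) : A :=
  match t with
  | Var x => v x
  | App f args => @ops F A f (fun i => eval v (args i))
  end.

Fixpoint tsubst (F : signature) (X Y : Type) (s : X -> term F Y)
  (t : term F X) : term F Y :=
  match t with
  | Var x => s x
  | App f args => App f (fun i => tsubst s (args i))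
  end.

Definition identities (F : signature) := term F nat -> term F nat -> Prop.

Definition models (F : signature) (A : algebra F) (Sigma : identities F) :=
  forall s t, Sigma s t -> forall v : nat -> A, eval v s = eval v t.

Definition identity_of (F : signature) (Sigma : identities F) (X : Type)
  (s t : term F X) :=
  forall A : algebra F, models A Sigma -> forall v : X -> A, eval v s = eval v t.

(* A constant of the algebraic theory: a term in no variables. *)
Definition const_term (F : signature) := term F Empty_set.
Definition embed (F : signature) (X : Type) (z : const_term F) : term F X :=
  tsubst (fun e : Empty_set => match e with end) z.

(* BIT speciale data for the variety defined by Sigma:
   constant 0 = z, binary terms alpha_i (variables x = ord0, y = ord_max of 'I_2),
   (n+1)-ary term theta (variables Some i for i < n, and None for the last one). *)
Definition BIT_speciale (F : signature) (Sigma : identities F)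
  (z : const_term F) (n : nat) (alpha : 'I_n -> term F 'I_2)
  (theta : term F (option 'I_n)) :=
  [/\ (1 <= n)%N,
      (forall i, identity_of Sigma
          (tsubst (fun _ => Var tt) (alpha i)) (embed unit z)) &
      identity_of Sigma
        (tsubst (fun o => match o with
                          | Some i => alpha i
                          | None => Var (ord_max : 'I_2)
                          end) theta)
        (Var (ord0 : 'I_2))].

(* Ideal terms of the variety defined by Sigma (w.r.t. the constant z),
   in variables x_1..x_m (inl) and y_1..y_p (inr):
   t(x_1,...,x_m,0,...,0) = 0 is an identity. *)
Definition ideal_term (F : signature) (Sigma : identities F) (z : const_term F)
  (m p : nat) (t : term F ('I_m + 'I_p)) :=
  identity_of Sigma
    (tsubst (fun v => match v with
                      | inl i => Var i
                      | inr _ => embed 'I_m z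
                      end) t)
    (embed 'I_m z).

Definition is_ideal (F : signature) (Sigma : identities F) (z : const_term F)
  (A : algebra F) (H : A -> Prop) :=
  (exists h, H h) /\
  forall (m p : nat) (t : term F ('I_m + 'I_p)), ideal_term Sigma z t ->
    forall (a : 'I_m -> A) (b : 'I_p -> A), (forall s, H (b s)) ->
      H (eval (fun v => match v with inl i => a i | inr s => b s end) t).
Arguments is_ideal {F} Sigma z A H.
Arguments ideal_term {F} Sigma z {m p} t.
Arguments BIT_speciale {F} Sigma z {n} alpha theta.
Arguments models {F} A Sigma.
Arguments identity_of {F} Sigma {X} s t.

(* An ideal of A' in V' is an ideal in V, since every ideal term of V is one
   of V'.  Conversely, let H be an ideal in V, t(x, y) an ideal term of V' and
   u = t(a, b) with b in H.  Each alpha_i(t(x, y), t(x, 0)) is an ideal term of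
   V, whatever t is, because it collapses to alpha_i(w, w) = 0 at y = 0; hence
   alpha_i(u, t(a, 0)) = alpha_i(u, 0) lies in H, as t(a, 0) = 0 holds in A'.
   Since theta(y_1, ..., y_n, 0) is also an ideal term of V, the element
   u = theta(alpha_1(u, 0), ..., alpha_n(u, 0), 0) lies in H. *)
From Stdlib Require Import FunctionalExtensionality.
From mathcomp Require Import all_boot.
Set Implicit Arguments.
Unset Strict Implicit.

Section Terms.
Variable F : signature.

Lemma eval_ext (A : algebra F) (X : Type) (v w : X -> A) (t : term F X) :
  v =1 w -> eval v t = eval w t.
Proof. by move=> /functional_extensionality ->. Qed.

Lemma eval_tsubst (A : algebra F) (X Y : Type) (v : Y -> A)
    (s : X -> term F Y) (t : term F X) :
  eval v (tsubst s t) = eval (fun x => eval v (s x)) t.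
Proof.
elim: t => [x|f args IH] //=.
by congr ops; apply: functional_extensionality => i; apply: IH.
Qed.

Definition zeroA (z : const_term F) (A : algebra F) : A :=
  eval (fun e : Empty_set => match e with end) z.

Lemma eval_embed (z : const_term F) (A : algebra F) (X : Type) (v : X -> A) :
  eval v (embed X z) = zeroA z A.
Proof. by rewrite /embed eval_tsubst; apply: eval_ext => -[]. Qed.

Definition val2 (A : Type) (c d : A) (k : 'I_2) : A := if k == ord0 then c else d.

Definition tapp2 (X : Type) (s : term F 'I_2) (t u : term F X) : term F X :=
  tsubst (val2 t u) s.

Lemma eval_tapp2 (A : algebra F) (X : Type) (v : X -> A) s (t u : term F X) :
  eval v (tapp2 s t u) = eval (val2 (eval v t) (eval v u)) s.
Proof. by rewrite eval_tsubst; apply: eval_ext => k; rewrite /val2; case: ifP. Qed.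

End Terms.

Section Ideals.
Variables (F : signature) (Sigma : identities F) (z : const_term F).

Lemma models_sub (Sigma' : identities F) (A : algebra F) :
  (forall s t, Sigma s t -> Sigma' s t) -> models A Sigma' -> models A Sigma.
Proof. by move=> sub HA s t /sub; apply: HA. Qed.

Lemma is_ideal_sub (Sigma' : identities F) (A : algebra F) (H : A -> Prop) :
  (forall s t, Sigma s t -> Sigma' s t) ->
  is_ideal Sigma' z A H -> is_ideal Sigma z A H.
Proof.
move=> sub [Hne Hcl]; split=> // m p t Ht; apply: Hcl => B HB.
exact/Ht/(models_sub sub).
Qed.

Definition zero_right (m p : nat) (t : term F ('I_m + 'I_p)) :
    term F ('I_m + 'I_p) :=
  tsubst (fun x => if x is inl i then Var (inl i) else embed _ z) t.

Lemma eval_zero_right (A : algebra F) m p (v : 'I_m + 'I_p -> A) t :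
  eval v (zero_right t) =
  eval (fun x => if x is inl i then v (inl i) else zeroA z A) t.
Proof. by rewrite eval_tsubst; apply: eval_ext => -[i|s] //=; rewrite eval_embed. Qed.

Lemma ideal_term_zero_right (A : algebra F) m p (t : term F ('I_m + 'I_p))
    (v : 'I_m + 'I_p -> A) :
  ideal_term Sigma z t -> models A Sigma -> eval v (zero_right t) = zeroA z A.
Proof.
move=> Ht HA; rewrite eval_zero_right -[RHS](eval_embed z (fun i => v (inl i))).
rewrite -(Ht A HA) eval_tsubst.
by apply: eval_ext => -[i|s] //=; rewrite eval_embed.
Qed.

Section BITSpeciale.
Variables (n : nat) (alpha : 'I_n -> term F 'I_2) (theta : term F (option 'I_n)).
Hypothesis BIT : BIT_speciale Sigma z alpha theta.

Lemma alpha_diag (A : algebra F) (c : A) i :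
  models A Sigma -> eval (val2 c c) (alpha i) = zeroA z A.
Proof.
case: BIT => _ Halpha _ HA.
rewrite -(eval_embed z (fun _ : unit => c)) -(Halpha i A HA) eval_tsubst.
by apply: eval_ext => k; rewrite /val2 if_same.
Qed.

Lemma theta_alpha (A : algebra F) (c d : A) :
  models A Sigma ->
  eval (fun o => if o is Some i then eval (val2 c d) (alpha i) else d) theta = c.
Proof.
case: BIT => _ _ Htheta HA.
rewrite -[RHS]/(eval (val2 c d) (Var ord0)) -(Htheta A HA) eval_tsubst.
by apply: eval_ext => -[i|].
Qed.

Definition theta_ideal : term F ('I_0 + 'I_n) :=
  tsubst (fun o => if o is Some i then Var (inr i) else embed _ z) theta.

Lemma ideal_term_theta : ideal_term Sigma z theta_ideal.
Proof.
move=> B HB w; rewrite eval_embed !eval_tsubst.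
rewrite -(theta_alpha (zeroA z B) (zeroA z B) HB).
by apply: eval_ext => -[i|] /=; rewrite eval_embed ?alpha_diag.
Qed.

Lemma ideal_term_alpha_zero_right m p (t : term F ('I_m + 'I_p)) i :
  ideal_term Sigma z (tapp2 (alpha i) t (zero_right t)).
Proof.
move=> B HB w; rewrite eval_embed eval_tsubst eval_tapp2 eval_zero_right.
set w' := fun x => eval w _.
have -> : eval (fun x => if x is inl j then w' (inl j) else zeroA z B) t =
          eval w' t by apply: eval_ext => -[j|s] //=; rewrite /w' eval_embed.
exact: alpha_diag.
Qed.

Lemma ideal_mem_of_alpha (A : algebra F) (H : A -> Prop) (c : A) :
  models A Sigma -> is_ideal Sigma z A H ->
  (forall i, H (eval (val2 c (zeroA z A)) (alpha i))) -> H c.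
Proof.
move=> HA [_ Hcl] Hc.
have -> : c = eval (fun x => if x is inr i then eval (val2 c (zeroA z A)) (alpha i)
                             else c) theta_ideal.
  rewrite eval_tsubst -{1}(theta_alpha c (zeroA z A) HA).
  by apply: eval_ext => -[i|] //=; rewrite eval_embed.
exact: Hcl ideal_term_theta _ _ Hc.
Qed.

End BITSpeciale.

End Ideals.

Theorem corollary2p8 (F : signature) (Sigma Sigma' : identities F)
  (Hsub : forall s t, Sigma s t -> Sigma' s t)
  (z : const_term F) (n : nat) (alpha : 'I_n -> term F 'I_2)
  (theta : term F (option 'I_n))
  (HBIT : BIT_speciale Sigma z alpha theta)
  (A' : algebra F) (HA' : models A' Sigma') (H : A' -> Prop) :
  is_ideal Sigma' z A' H <-> is_ideal Sigma z A' H.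
Proof.
have HA : models A' Sigma := models_sub Hsub HA'.
split; first exact: is_ideal_sub.
move=> HI; case: (HI) => Hne Hcl; split=> // m p t Ht a b Hb.
apply: (ideal_mem_of_alpha HBIT HA HI) => i.
have := Hcl m p _ (ideal_term_alpha_zero_right HBIT t i) a b Hb.
by rewrite eval_tapp2 (ideal_term_zero_right _ Ht HA').
Qed.
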